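(* Let $A\in\mathbb{R}^{m\times n}$, let $A^\dagger\in\mathbb{R}^{n\times m}$ be its Moore–Penrose pseudoinverse, and let $\|\cdot\|$ denote the Frobenius norm. (i) The problem $\min_{X\in\mathbb{R}^{n\times m}} \tfrac12\|X\|^2$ subject to $A^\top = A^\top A X$ is equivalent to (has the same $X$-solution as) the problem $\min_{X,\Gamma}\tfrac12\|X-A^\dagger\|^2$ subject to $X = A^\top A\Gamma$. (ii) For any $X_k\in\mathbb{R}^{n\times m}$ and any $S\in\mathbb{R}^{m\times\tau}$ ($\tau$ any positive integer), the problem $$X_{k+1} = \arg\min_X \tfrac12\|X-X_k\|^2 \quad\text{subject to}\quad S^\top A^\top = S^\top A^\top A X$$ is equivalent to (has the same $X$-solution as) the problem $\min_{X,\Gamma}\tfrac12\|X-A^\dagger\|^2$ subject to $X = X_k + A^\top A S\Gamma$. (iii) The solution of the problem in (ii) is given explicitly by $$X_{k+1} = X_k - A^\top A S\,(S^\top A^\top A A^\top A S)^\dagger S^\top A^\top (A X_k - I).$$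
   Context: For a real matrix $M$, $M^\dagger$ denotes its Moore–Penrose pseudoinverse. The Frobenius inner product is $\langle X,Y\rangle=\mathrm{Tr}(X^\top Y)$ and $\|X\|=\sqrt{\mathrm{Tr}(X^\top X)}$. *)

From HB Require Import structures.
From mathcomp Require Import all_boot all_order all_algebra.
Set Implicit Arguments. Unset Strict Implicit. Unset Printing Implicit Defensive.
Import Order.TTheory GRing.Theory Num.Theory.
Local Open Scope ring_scope.

Definition is_pinv (R : rcfType) (m n : nat) (A : 'M[R]_(m, n)) (P : 'M[R]_(n, m)) : Prop :=
  [/\ A *m P *m A = A, P *m A *m P = P, (A *m P)^T = A *m P & (P *m A)^T = P *m A].

Definition frob_inner (R : rcfType) (m n : nat) (X Y : 'M[R]_(m, n)) : R := \tr (X^T *m Y).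
Definition frob_norm (R : rcfType) (m n : nat) (X : 'M[R]_(m, n)) : R :=
  Num.sqrt (frob_inner X X).

Definition is_argmin (R : rcfType) (T : Type) (feas : T -> Prop) (f : T -> R) (x : T) : Prop :=
  feas x /\ forall y, feas y -> f x <= f y.

From mathcomp Require Import all_boot all_order all_algebra.
Import Order.TTheory GRing.Theory Num.Theory.
Local Open Scope ring_scope.

(* Both problems in (i) and (ii) are orthogonal projections for the Frobenius
   inner product.  Put B := A^T A S and pick C with B^T B C = B^T (always
   solvable), so that B C projects orthogonally onto the range of B.  The point
   Xs := Xk - B C (Xk - A^+) is feasible for both problems, and Pythagoras gives
   ||Y - Z||^2 = ||Xs - Z||^2 + ||Y - Xs||^2 for every feasible Y, Z being the
   respective centre: for the constrained problem Xs - Xk lies in range B and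
   Y - Xs in ker B^T, for the affine one Y - Xs lies in range B and Xs - A^+ in
   ker B^T.  So Xs is the unique minimizer of both.  The pseudoinverse enters
   only through A^T A A^+ = A^T, which turns S^T A^T = S^T A^T A X into
   B^T X = B^T A^+; (i) is the case S = 1, Xk = 0, and (iii) is the choice
   C = (B^T B)^+ B^T. *)

Section Frobenius.
Context {R : rcfType}.

Lemma frob_innerE {a b} (X Y : 'M[R]_(a, b)) :
  frob_inner X Y = \sum_j \sum_i X i j * Y i j.
Proof.
by apply: eq_bigr => j _; rewrite mxE; apply: eq_bigr => i _; rewrite mxE.
Qed.

Lemma frob_inner_self_ge0 {a b} (X : 'M[R]_(a, b)) : 0 <= frob_inner X X.
Proof. by rewrite frob_innerE; do 2![apply: sumr_ge0 => ? _]; rewrite -expr2 sqr_ge0. Qed.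

Lemma frob_inner_self_eq0 {a b} (X : 'M[R]_(a, b)) : frob_inner X X = 0 -> X = 0.
Proof.
have sq_ge0 (x : R) : 0 <= x * x by rewrite -expr2 sqr_ge0.
have col_ge0 j : 0 <= \sum_i X i j * X i j by apply: sumr_ge0 => i _.
rewrite frob_innerE => /(psumr_eq0P (fun j _ => col_ge0 j)) sum0.
apply/matrixP => i j; rewrite mxE; apply/eqP; rewrite -[X i j == 0]orbb -mulf_eq0.
by rewrite (psumr_eq0P (fun i _ => sq_ge0 _) (sum0 j isT)).
Qed.

Lemma frob_norm_sqr {a b} (X : 'M[R]_(a, b)) : frob_norm X ^+ 2 = frob_inner X X.
Proof. by rewrite sqr_sqrtr ?frob_inner_self_ge0. Qed.

Lemma frob_innerC {a b} (X Y : 'M[R]_(a, b)) : frob_inner X Y = frob_inner Y X.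
Proof. by rewrite /frob_inner -mxtrace_tr trmx_mul trmxK. Qed.

Lemma frob_inner0r {a b} (X : 'M[R]_(a, b)) : frob_inner X 0 = 0.
Proof. by rewrite /frob_inner mulmx0 mxtrace0. Qed.

Lemma frob_inner_mull {a b c} (B : 'M[R]_(a, b)) (G : 'M[R]_(b, c)) (Y : 'M[R]_(a, c)) :
  frob_inner (B *m G) Y = frob_inner G (B^T *m Y).
Proof. by rewrite /frob_inner trmx_mul mulmxA. Qed.

Lemma frob_norm_sqrD {a b} (U V : 'M[R]_(a, b)) : frob_inner U V = 0 ->
  frob_norm (U + V) ^+ 2 = frob_norm U ^+ 2 + frob_norm V ^+ 2.
Proof.
rewrite !frob_norm_sqr /frob_inner mulmxDr !linearD /= !mulmxDl !mxtraceD.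
rewrite -[\tr (V^T *m U)]/(frob_inner V U) frob_innerC /frob_inner => ->.
by rewrite addr0 add0r.
Qed.

Lemma trmx_in_gram_range {a p} (B : 'M[R]_(a, p)) : exists C, B^T *m B *m C = B^T.
Proof.
(* [B^T B K = 0] forces [B K = 0] because [||B K||^2 = <K, B^T B K>]. *)
have /submxP[D BE] : (B <= B^T *m B)%MS.
  rewrite submxE; apply/eqP/frob_inner_self_eq0.
  by rewrite frob_inner_mull mulmxA mulmx_coker frob_inner0r.
by exists D^T; rewrite [in RHS]BE (trmx_mul D) (trmx_mul B^T) trmxK.
Qed.

Lemma pinv_normal_eq {a p} (A : 'M[R]_(a, p)) Ad : is_pinv A Ad -> A^T *m A *m Ad = A^T.
Proof. by case=> AAdA _ AAd_sym _; rewrite -[in RHS]AAdA trmx_mul AAd_sym mulmxA. Qed.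

Lemma pinv_gram_normal_eq {a p} (B : 'M[R]_(a, p)) M :
  is_pinv (B^T *m B) M -> B^T *m B *m (M *m B^T) = B^T.
Proof.
have [C BE] := trmx_in_gram_range B.
by case=> GMG _ _ _; rewrite -{2}BE !mulmxA -(mulmxA _ B^T B) GMG BE.
Qed.

End Frobenius.

Lemma eq_is_argmin {R : rcfType} {T : Type} {F F' : T -> Prop} {f f' : T -> R} {x : T} :
  (forall y, F y <-> F' y) -> f =1 f' -> is_argmin F f x <-> is_argmin F' f' x.
Proof.
move=> FF' ff'; split=> -[/FF' Fx x_min]; split=> // y /FF' Fy.
  by rewrite -!ff'; apply: x_min.
by rewrite !ff'; apply: x_min.
Qed.

Section Projection.
Context {R : rcfType} {a c : nat}.

Lemma is_argmin_half_sqr_distP (T : Type) (feas : T -> Prop) (pi : T -> 'M[R]_(a, c))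
    (Z Xs : 'M[R]_(a, c)) :
  (exists2 t0, feas t0 & pi t0 = Xs) ->
  (forall t, feas t -> frob_inner (Xs - Z) (pi t - Xs) = 0) ->
  forall t, is_argmin feas (fun t => 2^-1 * frob_norm (pi t - Z) ^+ 2) t <->
            feas t /\ pi t = Xs.
Proof.
move=> [t0 feas_t0 pi_t0] orth.
have distE t : feas t ->
    frob_norm (pi t - Z) ^+ 2 = frob_norm (Xs - Z) ^+ 2 + frob_norm (pi t - Xs) ^+ 2.
  by move=> /orth/frob_norm_sqrD <-; rewrite [_ + (pi t - Xs)]addrC addrA subrK.
have half_gt0 : 0 < 2^-1 :> R by rewrite invr_gt0 ltr0n.
move=> t; split=> [[feas_t t_min] | [feas_t pi_t]].
  split=> //; apply/eqP; rewrite -subr_eq0; apply/eqP/frob_inner_self_eq0/le_anti.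
  have := t_min t0 feas_t0; rewrite pi_t0 (distE t feas_t) ler_pM2l // gerDl.
  by rewrite frob_norm_sqr frob_inner_self_ge0 => ->.
split=> // y feas_y; rewrite pi_t (distE y feas_y) ler_pM2l // lerDl.
by rewrite frob_norm_sqr frob_inner_self_ge0.
Qed.

Context {p : nat} {B : 'M[R]_(a, p)} {C : 'M[R]_(p, a)}.
Variables Xc T : 'M[R]_(a, c).
Hypothesis normalC : B^T *m B *m C = B^T.

Local Notation Xs := (Xc - B *m C *m (Xc - T)).

Lemma proj_normal_eq : B^T *m Xs = B^T *m T.
Proof.
by apply/eqP; rewrite -subr_eq0 -mulmxBr addrAC mulmxBr !mulmxA normalC subrr.
Qed.

Lemma proj_sub_center : Xs - Xc = B *m - (C *m (Xc - T)).
Proof. by rewrite addrAC subrr add0r mulmxN mulmxA. Qed.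

Lemma argmin_constrained_projE X :
  is_argmin (fun X => B^T *m X = B^T *m T) (fun X => 2^-1 * frob_norm (X - Xc) ^+ 2) X
  <-> X = Xs.
Proof.
have orth Y : B^T *m Y = B^T *m T -> frob_inner (Xs - Xc) (Y - Xs) = 0.
  move=> BY; rewrite proj_sub_center frob_inner_mull (mulmxBr B^T) BY proj_normal_eq.
  by rewrite subrr frob_inner0r.
have argminE := @is_argmin_half_sqr_distP _ (fun Y => B^T *m Y = B^T *m T) id Xc Xs
  (ex_intro2 _ _ Xs proj_normal_eq erefl) orth.
by split=> [/argminE[_ ->] // | ->]; apply/argminE; split=> //; apply: proj_normal_eq.
Qed.

Lemma argmin_affine_projE X :
  (exists G : 'M[R]_(p, c),
     is_argmin (fun XG : 'M[R]_(a, c) * 'M[R]_(p, c) => XG.1 = Xc + B *m XG.2)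
               (fun XG => 2^-1 * frob_norm (XG.1 - T) ^+ 2) (X, G))
  <-> X = Xs.
Proof.
set Gs := - (C *m (Xc - T)).
have Xs_feas : Xs = Xc + B *m Gs.
  by rewrite -proj_sub_center [RHS]addrC subrK.
have orth (YG : 'M_(a, c) * 'M_(p, c)) :
    YG.1 = Xc + B *m YG.2 -> frob_inner (Xs - T) (YG.1 - Xs) = 0.
  move=> ->; rewrite frob_innerC [X in frob_inner (_ - X) _]Xs_feas opprD addrACA.
  rewrite subrr add0r -mulmxBr frob_inner_mull (mulmxBr B^T) proj_normal_eq.
  by rewrite subrr frob_inner0r.
have argminE := @is_argmin_half_sqr_distP _ _ fst T Xs
  (ex_intro2 _ _ (Xs, Gs) Xs_feas erefl) orth.
split=> [[G /argminE[_ /= ->]] // | ->].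
by exists Gs; apply/argminE.
Qed.

End Projection.

Section SketchedProjection.
Context {R : rcfType} {m n : nat} {A : 'M[R]_(m, n)} {Ad : 'M[R]_(n, m)}.
Hypothesis normalAd : A^T *m A *m Ad = A^T.

Lemma trmx_gram_sketch {tau} (S : 'M[R]_(n, tau)) :
  (A^T *m A *m S)^T = S^T *m A^T *m A.
Proof. by rewrite !trmx_mul trmxK mulmxA. Qed.

Lemma sketch_normal_eq {tau} (S : 'M[R]_(n, tau)) : S^T *m A^T *m A *m Ad = S^T *m A^T.
Proof. by rewrite -[in RHS]normalAd !mulmxA. Qed.

Lemma sketched_constraintE {tau} (S : 'M[R]_(n, tau)) Y :
  S^T *m A^T = S^T *m A^T *m A *m Y <->
  (A^T *m A *m S)^T *m Y = (A^T *m A *m S)^T *m Ad.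
Proof. by rewrite trmx_gram_sketch sketch_normal_eq; split=> /esym. Qed.

Lemma sketched_projection_equiv {tau} (Xk : 'M[R]_(n, m)) (S : 'M[R]_(n, tau)) X :
  is_argmin (fun X : 'M[R]_(n, m) => S^T *m A^T = S^T *m A^T *m A *m X)
            (fun X => 2^-1 * frob_norm (X - Xk) ^+ 2) X
  <->
  exists G : 'M[R]_(tau, m),
    is_argmin (fun XG : 'M[R]_(n, m) * 'M[R]_(tau, m) => XG.1 = Xk + A^T *m A *m S *m XG.2)
              (fun XG => 2^-1 * frob_norm (XG.1 - Ad) ^+ 2) (X, G).
Proof.
have [C normalC] := trmx_in_gram_range (A^T *m A *m S).
apply: (iff_trans _ (iff_sym (argmin_affine_projE Xk Ad normalC X))).
apply: (iff_trans _ (argmin_constrained_projE Xk Ad normalC X)).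
exact: eq_is_argmin (sketched_constraintE S) (frefl _).
Qed.

Lemma min_norm_projection_equiv X :
  is_argmin (fun X : 'M[R]_(n, m) => A^T = A^T *m A *m X)
            (fun X => 2^-1 * frob_norm X ^+ 2) X
  <->
  exists G : 'M[R]_(n, m),
    is_argmin (fun XG : 'M[R]_(n, m) * 'M[R]_(n, m) => XG.1 = A^T *m A *m XG.2)
              (fun XG => 2^-1 * frob_norm (XG.1 - Ad) ^+ 2) (X, G).
Proof.
have feasE Y : A^T = A^T *m A *m Y <-> 1%:M^T *m A^T = 1%:M^T *m A^T *m A *m Y.
  by rewrite trmx1 !mul1mx.
have affineE (XG : 'M[R]_(n, m) * 'M[R]_(n, m)) :
    XG.1 = A^T *m A *m XG.2 <-> XG.1 = 0 + A^T *m A *m 1%:M *m XG.2.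
  by rewrite add0r mulmx1.
have objE : (fun Y => 2^-1 * frob_norm Y ^+ 2) =1
            (fun Y : 'M[R]_(n, m) => 2^-1 * frob_norm (Y - 0) ^+ 2).
  by move=> Y; rewrite subr0.
apply: (iff_trans (eq_is_argmin feasE objE)).
apply: (iff_trans (sketched_projection_equiv 0 1%:M X)).
by split=> -[G /(eq_is_argmin affineE (frefl _)) ?]; exists G.
Qed.

Lemma sketched_projectionE {tau} (Xk : 'M[R]_(n, m)) (S : 'M[R]_(n, tau)) M :
  is_pinv (S^T *m A^T *m A *m A^T *m A *m S) M ->
  forall X : 'M[R]_(n, m),
    is_argmin (fun X : 'M[R]_(n, m) => S^T *m A^T = S^T *m A^T *m A *m X)
              (fun X => 2^-1 * frob_norm (X - Xk) ^+ 2) X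
    <-> X = Xk - A^T *m A *m S *m M *m S^T *m A^T *m (A *m Xk - 1%:M).
Proof.
set B := A^T *m A *m S.
have -> : S^T *m A^T *m A *m A^T *m A *m S = B^T *m B.
  by rewrite trmx_gram_sketch !mulmxA.
move=> /pinv_gram_normal_eq normalM X.
have BtE : B^T *m (Xk - Ad) = S^T *m A^T *m (A *m Xk - 1%:M).
  by rewrite (mulmxBr B^T) trmx_gram_sketch sketch_normal_eq mulmxBr mulmx1 !mulmxA.
have -> : A^T *m A *m S *m M *m S^T *m A^T *m (A *m Xk - 1%:M) =
          B *m (M *m B^T) *m (Xk - Ad).
  by rewrite -!mulmxA BtE !mulmxA.
apply: (iff_trans _ (argmin_constrained_projE Xk Ad normalM X)).
exact: eq_is_argmin (sketched_constraintE S) (frefl _).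
Qed.

End SketchedProjection.

Theorem theorem1 (R : rcfType) (m n : nat) (A : 'M[R]_(m, n)) (Ad : 'M[R]_(n, m)) :
  is_pinv A Ad ->
  (* (i) *)
  (forall X : 'M[R]_(n, m),
     is_argmin (fun X : 'M[R]_(n, m) => A^T = A^T *m A *m X)
               (fun X => 2^-1 * frob_norm X ^+ 2) X
     <->
     exists G : 'M[R]_(n, m),
       is_argmin (fun XG : 'M[R]_(n, m) * 'M[R]_(n, m) => XG.1 = A^T *m A *m XG.2)
                 (fun XG => 2^-1 * frob_norm (XG.1 - Ad) ^+ 2) (X, G))
  /\
  (forall (tau : nat), (0 < tau)%N ->
   forall (Xk : 'M[R]_(n, m)) (S : 'M[R]_(n, tau)),
     (* (ii) *)
     (forall X : 'M[R]_(n, m),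
        is_argmin (fun X : 'M[R]_(n, m) => S^T *m A^T = S^T *m A^T *m A *m X)
                  (fun X => 2^-1 * frob_norm (X - Xk) ^+ 2) X
        <->
        exists G : 'M[R]_(tau, m),
          is_argmin (fun XG : 'M[R]_(n, m) * 'M[R]_(tau, m) =>
                       XG.1 = Xk + A^T *m A *m S *m XG.2)
                    (fun XG => 2^-1 * frob_norm (XG.1 - Ad) ^+ 2) (X, G))
     /\
     (* (iii) *)
     (forall M : 'M[R]_(tau, tau),
        is_pinv (S^T *m A^T *m A *m A^T *m A *m S) M ->
        forall X : 'M[R]_(n, m),
          is_argmin (fun X : 'M[R]_(n, m) => S^T *m A^T = S^T *m A^T *m A *m X)
                    (fun X => 2^-1 * frob_norm (X - Xk) ^+ 2) X
          <->
          X = Xk - A^T *m A *m S *m M *m S^T *m A^T *m (A *m Xk - 1%:M))).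
Proof.
move=> /pinv_normal_eq normalAd; split=> [X | tau _ Xk S].
  exact: min_norm_projection_equiv.
split=> [X | M]; first exact: sketched_projection_equiv.
exact: (sketched_projectionE normalAd Xk S M).
Qed.
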